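(* Let $\pi_1,\pi_2$ be probability vectors on the finite set $E$ with strictly positive entries, and take $P_{x,x'}=\pi_1(x')$, $Q_{y,y'}=\pi_2(y')$ for all $x,x',y,y'\in E$. Let $f:E\times E\to\mathbb Z$ with $\pi_1\otimes\pi_2(f)<0$ and $f(x,y)>0$ for some $(x,y)$. Then $\theta^*>0$ solves $\sum_{x,y}e^{\theta f(x,y)}\pi_1(x)\pi_2(y)=1$, $\pi^*(x,y)=e^{\theta^*f(x,y)}\pi_1(x)\pi_2(y)$, and with $\pi^*_1,\pi^*_2$ the marginals of $\pi^*$, $$J_1=2\theta^*\pi^*(f)-H(\pi^*_1\mid\pi_1),\qquad J_2=2\theta^*\pi^*(f)-H(\pi^*_2\mid\pi_2).$$ Consequently $2\min\{J_1,J_2\}>3\theta^*\pi^*(f)$ holds if and only if $$H(\pi^*\mid\pi_1\otimes\pi_2)>2\max\{H(\pi^*_1\mid\pi_1),H(\pi^*_2\mid\pi_2)\}.$$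
   Context: $H(\alpha\mid\beta)=\sum_z\alpha(z)\log(\alpha(z)/\beta(z))$ is relative entropy; $\nu(f)=\sum f\,d\nu$. For general irreducible stochastic $P,Q$ on $E$: $\Phi(\theta)_{(x,y),(x',y')}=e^{\theta f(x',y')}P_{x,x'}Q_{y,y'}$ with spectral radius $\varphi(\theta)$; $\theta^*>0$ is the unique positive solution of $\varphi(\theta)=1$; $r^*$ a positive right eigenvector of $\Phi(\theta^* )$ for eigenvalue $1$; $R^*_{(x,y),(x',y')}=\frac{r^*(x',y')}{r^*(x,y)}\Phi(\theta^* )_{(x,y),(x',y')}$; $\pi^*$ its invariant probability vector; $\hat\pi(x,y,x',y')=\pi^*(x,y)R^*_{(x,y),(x',y')}$; $f$ is also regarded as a function on $E^2\times E^2$ by $f(x,y,x',y')=f(x',y')$. For $g:E^2\times E^2\to\mathbb R$, $\varphi_1(g),\varphi_2(g)$ are the spectral radii of $\Phi_1(g)_{(x,y,z),(x',y',z')}=\exp(g(x,y,x',y')+g(x,z,x',z'))P_{x,x'}Q_{y,y'}Q_{z,z'}$ and $\Phi_2(g)_{(x,w,y),(x',w',y')}=\exp(g(x,y,x',y')+g(w,y,w',y'))P_{x,x'}P_{w,w'}Q_{y,y'}$, and $J_i=\sup_g\{2\hat\pi(g)-\log\varphi_i(g)\}$, $i=1,2$. *)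

From HB Require Import structures.
From mathcomp Require Import all_boot all_order all_algebra.
From mathcomp Require Import all_classical all_reals all_analysis.
From mathcomp Require Import complex.
Set Implicit Arguments. Unset Strict Implicit. Unset Printing Implicit Defensive.
Import Order.TTheory GRing.Theory Num.Theory.
Local Open Scope ring_scope.
Local Open Scope classical_set_scope.

Section Defs.
Variable R : realType.

Definition mx_of (T : finType) (F : T -> T -> R) : 'M[R]_#|T| :=
  \matrix_(i, j) F (enum_val i) (enum_val j).

Definition cmod (l : complex.complex R) : R :=
  Num.sqrt (complex.Re l ^+ 2 + complex.Im l ^+ 2).

Definition spectral_radius (n : nat) (A : 'M[R]_n) : R :=
  sup [set r : R | exists l : complex.complex R,
        root (char_poly (map_mx (fun x : R => complex.Complex x 0) A)) l
        /\ r = cmod l].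

Definition spectral_radius_of (T : finType) (F : T -> T -> R) : R :=
  spectral_radius (mx_of F).

Definition relent (T : finType) (alpha beta : T -> R) : R :=
  \sum_(z : T) alpha z * ln (alpha z / beta z).

Variable E : finType.

(* Phi(theta) for P_{x,x'} = pi1 x', Q_{y,y'} = pi2 y' *)
Definition Phi (pi1 pi2 : E -> R) (f : E * E -> int) (theta : R)
  (a b : E * E) : R :=
  expR (theta * (f b)%:~R) * pi1 b.1 * pi2 b.2.

(* R^* built from a right eigenvector r *)
Definition Rstar (pi1 pi2 : E -> R) (f : E * E -> int) (theta : R)
  (r : E * E -> R) (a b : E * E) : R :=
  r b / r a * Phi pi1 pi2 f theta a b.

Definition pihat (pi1 pi2 : E -> R) (f : E * E -> int) (theta : R)
  (r pis : E * E -> R) (x y x' y' : E) : R :=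
  pis (x, y) * Rstar pi1 pi2 f theta r (x, y) (x', y').

Definition pihat_int (pi1 pi2 : E -> R) (f : E * E -> int) (theta : R)
  (r pis : E * E -> R) (g : E -> E -> E -> E -> R) : R :=
  \sum_(x : E) \sum_(y : E) \sum_(x' : E) \sum_(y' : E)
     pihat pi1 pi2 f theta r pis x y x' y' * g x y x' y'.

Definition Phi1 (pi1 pi2 : E -> R) (g : E -> E -> E -> E -> R)
  (a b : E * E * E) : R :=
  let: (x, y, z) := a in let: (x', y', z') := b in
  expR (g x y x' y' + g x z x' z') * pi1 x' * pi2 y' * pi2 z'.

Definition Phi2 (pi1 pi2 : E -> R) (g : E -> E -> E -> E -> R)
  (a b : E * E * E) : R :=
  let: (x, w, y) := a in let: (x', w', y') := b in
  expR (g x y x' y' + g w y w' y') * pi1 x' * pi1 w' * pi2 y'.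

Definition J1 (pi1 pi2 : E -> R) (f : E * E -> int) (theta : R)
  (r pis : E * E -> R) : \bar R :=
  ereal_sup [set ((2 * pihat_int pi1 pi2 f theta r pis g
                   - ln (spectral_radius_of (Phi1 pi1 pi2 g)))%:E)%E
            | g in [set: E -> E -> E -> E -> R]].

Definition J2 (pi1 pi2 : E -> R) (f : E * E -> int) (theta : R)
  (r pis : E * E -> R) : \bar R :=
  ereal_sup [set ((2 * pihat_int pi1 pi2 f theta r pis g
                   - ln (spectral_radius_of (Phi2 pi1 pi2 g)))%:E)%E
            | g in [set: E -> E -> E -> E -> R]].

Definition marg1 (pis : E * E -> R) (x : E) : R := \sum_(y : E) pis (x, y).
Definition marg2 (pis : E * E -> R) (y : E) : R := \sum_(x : E) pis (x, y).

Definition integ (mu : E * E -> R) (f : E * E -> int) : R :=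
  \sum_(z : E * E) mu z * (f z)%:~R.

End Defs.

(* Since P and Q have constant rows, Phi(theta) has all rows equal to
   w = exp(theta f) pi1 (x) pi2: its positive eigenvector r is constant, so
   sum w = 1, R* = Phi(theta) and its invariant law pi* is w itself.
   Both Phi_1(g) and Phi_2(g) are kernels exp(g(s1 a, s1 b) + g(s2 a, s2 b)) nu(b)
   on E^3, and the coupling q of two copies of pi* sharing their first
   (resp. second) coordinate is sent to pi* by both projections s1, s2.
   The Donsker-Varadhan bound ln rho(A) >= sum_a q_a sum_b q_b ln (A_ab / q_b),
   obtained from a positive subinvariant vector built from adj (X - A), gives
   J_i <= 2 theta pi*(f) - H(pi*_i | pi_i); equality holds at
   g(z, z') = theta f(z') - ln (pi*_i / pi_i)(z') / 2, for which all rows of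
   Phi_i(g) equal q.  As H(pi* | pi1 (x) pi2) = theta pi*(f), the final
   equivalence is arithmetic. *)

From HB Require Import structures.
From mathcomp Require Import all_boot all_order all_algebra.
From mathcomp Require Import all_classical all_reals all_analysis.
From mathcomp Require Import complex polyrcf ring lra.
Set Implicit Arguments.
Unset Strict Implicit.
Unset Printing Implicit Defensive.
Import Order.TTheory GRing.Theory Num.Theory.
Local Open Scope ring_scope.

Lemma poly_gt0_above_roots (R : rcfType) (q : {poly R}) (s : R) :
  0 < lead_coef q -> (forall u, s <= u -> ~~ root q u) ->
  forall u, s <= u -> 0 < q.[u].
Proof.
move=> lq_gt0 noroot u su.
have [L qL] := poly_pinfty_gt_lc lq_gt0.
have qmax : 0 < q.[Num.max u L].
  by apply: lt_le_trans (qL _ _); rewrite ?le_max ?lexx ?orbT.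
case: (ltrgtP q.[u] 0) => // [qu_lt0|qu0]; last first.
  by move: (noroot u su); rewrite /root qu0 eqxx.
have [x /andP[ux _] rx] : {x | x \in `]u, Num.max u L[ & root q x}.
  by apply: poly_ivtoo; rewrite ?le_max ?lexx // pmulr_llt0.
by move: (noroot x (le_trans su (ltW ux))); rewrite rx.
Qed.

Section SubinvariantVector.
Variables (R : realType) (n : nat) (B : 'M[R]_n).
Hypothesis B_ge0 : forall i j, 0 <= B i j.

Let p := char_poly B.
Let Y i : {poly R} := \sum_j (\adj (char_poly_mx B)) i j.

Lemma horner_adj_rowsum u i : u * (Y i).[u] - \sum_j B i j * (Y j).[u] = p.[u].
Proof.
have rowsum : \sum_j (char_poly_mx B) i j * Y j = p.
  transitivity (\sum_k (char_poly_mx B *m \adj (char_poly_mx B)) i k).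
    under eq_bigr do rewrite big_distrr.
    by rewrite exchange_big; apply: eq_bigr => k _; rewrite mxE.
  rewrite mul_mx_adj (bigD1 i) //= mxE eqxx big1 ?addr0 // => k ki.
  by rewrite mxE eq_sym (negbTE ki).
rewrite -rowsum [RHS]horner_sum.
rewrite [RHS](eq_bigr (fun j => u *+ (i == j) * (Y j).[u] - B i j * (Y j).[u]));
  last first.
  by move=> j _; rewrite hornerM !mxE hornerD hornerN hornerMn hornerX hornerC mulrBl.
rewrite sumrB; congr (_ - _); rewrite (bigD1 i) //= eqxx mulr1n big1 ?addr0 // => j ji.
by rewrite eq_sym (negbTE ji) mulr0n mul0r.
Qed.

Lemma adj_rowsum_gt0 u : 0 < u -> 0 < p.[u] ->
  (forall i, 0 <= (Y i).[u]) -> forall i, 0 < (Y i).[u].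
Proof.
move=> u_gt0 pu_gt0 Y_ge0 i; rewrite -(pmulr_rgt0 _ u_gt0).
rewrite -[_ * _](subrK (\sum_j B i j * (Y j).[u])) horner_adj_rowsum.
by rewrite ltr_pwDl // sumr_ge0 // => j _; rewrite mulr_ge0.
Qed.

Lemma adj_rowsum_gt0_large u : 0 < p.[u] ->
  (forall i, \sum_j B i j < u) -> forall i, 0 < (Y i).[u].
Proof.
move=> pu_gt0 rowsum_lt i.
have [m _ Ym_min] := @arg_minP _ _ _ i xpredT (fun k => (Y k).[u]) isT.
apply: lt_le_trans (Ym_min i isT).
rewrite -(pmulr_rgt0 _ (_ : 0 < u - \sum_j B m j)) ?subr_gt0 //.
apply: lt_le_trans pu_gt0 _; rewrite -(horner_adj_rowsum u m) mulrBl lerB //.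
by rewrite mulr_suml; apply: ler_sum => j _; rewrite ler_wpM2l ?Ym_min.
Qed.

Lemma exists_subinvariant_vector s : 0 < s ->
  (forall u, s <= u -> ~~ root p u) ->
  exists y : 'I_n -> R, (forall i, 0 < y i) /\
    (forall i, \sum_j B i j * y j < s * y i).
Proof.
move=> s_gt0 noroot.
have p_lead_gt0 : 0 < lead_coef p by rewrite (monicP (char_poly_monic B)).
have p_gt0 := poly_gt0_above_roots p_lead_gt0 noroot.
pose L := Num.max s (1 + \sum_i \sum_j B i j).
have sL : s <= L by rewrite le_max lexx.
have Y_gt0_L : forall i, 0 < (Y i).[L].
  apply: adj_rowsum_gt0_large; first exact: p_gt0.
  move=> i; apply: lt_le_trans (_ : 1 + \sum_i \sum_j B i j <= L); last first.
    by rewrite le_max lexx orbT.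
  apply: ltr_pwDl => //; rewrite [leRHS](bigD1 i) //= lerDl.
  by apply: sumr_ge0 => k _; apply: sumr_ge0.
(* Positivity of Y, true at L, can only be lost going down from L by crossing
   a root of Q; at the last root of Q in [s, L] it is nevertheless forced by
   adj_rowsum_gt0, so there is no such root. *)
pose Q := \prod_i Y i.
have hornerQ x : Q.[x] = \prod_i (Y i).[x] by rewrite horner_prod.
have Y_gt0 c : s <= c -> c <= L -> {in `]c, L[, forall z, ~~ root Q z} ->
    forall i, 0 < (Y i).[c].
  move=> sc cL Q_noroot; apply: adj_rowsum_gt0.
  - exact: lt_le_trans sc.
  - exact: p_gt0.
  move=> i; rewrite leNgt; apply/negP => Yc_lt0.
  have [x xcL rx] : {x | x \in `]c, L[ & root (Y i) x}.
    by apply: poly_ivtoo => //; rewrite pmulr_llt0.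
  by move: (Q_noroot x xcL); rewrite /root hornerQ (bigD1 i) //= (eqP rx) mul0r eqxx.
pose c := prev_root Q s L.
have /andP[sc cL] : s <= c <= L.
  by have := prev_root_in Q s L; rewrite (min_idPl sL) in_itv.
have Yc_gt0 := Y_gt0 c sc cL (@prev_noroot _ Q s L).
have Qc_neq0 : Q.[c] != 0.
  by rewrite hornerQ prodf_seq_neq0; apply/allP => i _; rewrite gt_eqF.
have cs : c = s.
  move: Qc_neq0; rewrite /c.
  case: prev_rootP => [->|y _ ->|c' _ -> _]; rewrite ?horner0 ?eqxx //.
  by move=> _; apply/min_idPl.
exists (fun i => (Y i).[s]); split => [i|i]; first by rewrite -cs.
by rewrite -subr_gt0 horner_adj_rowsum p_gt0.
Qed.

End SubinvariantVector.

Local Open Scope classical_set_scope.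

Section SpectralRadius.
Variable R : realType.

Lemma cmod_ge0 (l : R[i]) : 0 <= cmod l.
Proof. exact: sqrtr_ge0. Qed.

Lemma cmod_real (l : R) : 0 <= l -> cmod (Complex l 0) = l.
Proof. by move=> l_ge0; rewrite /cmod /= expr0n /= addr0 sqrtr_sqr ger0_norm. Qed.

Lemma has_ubound_spectrum (n : nat) (A : 'M[R]_n) :
  has_ubound [set r : R | exists l : R[i],
    root (char_poly (map_mx (fun x : R => Complex x 0) A)) l /\ r = cmod l].
Proof.
set cp := char_poly _; have [rs cpE] := closed_field_poly_normal cp.
exists (\sum_(z <- rs) cmod z) => _ [l [rl ->]].
move: rl; rewrite cpE (monicP (char_poly_monic _)) scale1r root_prod_XsubC => l_rs.
by rewrite (big_rem l) //= lerDl sumr_ge0 // => z _; apply: cmod_ge0.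
Qed.

Lemma spectral_radius_ge_root (n : nat) (A : 'M[R]_n) (l : R) :
  0 <= l -> root (char_poly A) l -> l <= spectral_radius A.
Proof.
move=> l_ge0 rl; rewrite -[l]cmod_real //.
have rl' : root (char_poly (map_mx (fun x : R => Complex x 0) A)) (Complex l 0).
  have -> : char_poly (map_mx (fun x : R => Complex x 0) A)
      = map_poly (real_complex R) (char_poly A) by rewrite map_char_poly.
  by rewrite (fmorph_root (real_complex R)).
apply: sup_upper_bound; last by exists (Complex l 0).
by split; [exists (cmod (Complex l 0)), (Complex l 0) | apply: has_ubound_spectrum].
Qed.

Lemma spectral_radius_rank_one_le1 (n : nat) (A : 'M[R]_n) (w : 'I_n -> R) :
  (forall i j, A i j = w j) -> \sum_j w j = 1 -> spectral_radius A <= 1.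
Proof.
move=> Aw w_sum1; rewrite /spectral_radius; set S := (X in sup X).
have [S_neq0|S0] := pselect (S !=set0); last first.
  by rewrite (_ : S = set0) ?sup0 ?ler01 //; apply/eqP; apply: contra_notT S0 => /set0P.
apply: ge_sup => // _ [l [rl ->]].
move: rl; rewrite -eigenvalue_root_char => /eigenvalueP [v vA v_neq0].
have vAj j : l * v 0 j = (\sum_i v 0 i) * (real_complex R (w j)).
  have := congr1 (fun M : 'M[R[i]]_(1, n) => M 0 j) vA; rewrite /= !mxE => <-.
  by rewrite mulr_suml; apply: eq_bigr => i _; rewrite !mxE Aw.
have [->|l_neq0] := eqVneq l 0; first by rewrite (_ : 0 = Complex 0 0) // cmod_real.
have sv_neq0 : \sum_i v 0 i != 0.
  apply: contraNneq v_neq0 => sv0; apply/eqP/rowP => j; rewrite mxE.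
  apply/eqP; move: (vAj j); rewrite sv0 mul0r => /eqP.
  by rewrite mulf_eq0 (negbTE l_neq0).
have : \sum_j l * v 0 j = 1 * \sum_j v 0 j.
  under [LHS]eq_bigr do rewrite vAj.
  rewrite -mulr_sumr -rmorph_sum w_sum1.
  by rewrite rmorph1 mulr1 mul1r.
by rewrite -mulr_sumr => /(mulIf sv_neq0) ->; rewrite (_ : 1 = Complex 1 0) // cmod_real.
Qed.

Lemma sum_mul_gt0 (T : finType) (q a : T -> R) :
  (forall b, 0 <= q b) -> \sum_b q b = 1 -> (forall b, 0 < a b) ->
  0 < \sum_b q b * a b.
Proof.
move=> q_ge0 q_sum1 a_gt0.
have qa_ge0 b : true -> 0 <= q b * a b.
  by move=> _; exact: mulr_ge0 (q_ge0 b) (ltW (a_gt0 b)).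
rewrite lt_def sumr_ge0 // andbT psumr_neq0 //.
have : \sum_b q b != 0 by rewrite q_sum1 oner_neq0.
rewrite psumr_neq0 //; apply: sub_has => b /= qb_gt0.
exact: mulr_gt0 qb_gt0 (a_gt0 b).
Qed.

Lemma sum_mul_ln_le_ln_sum (T : finType) (q x : T -> R) :
  (forall b, 0 < q b) -> \sum_b q b = 1 -> (forall b, 0 < x b) ->
  \sum_b q b * ln (x b) <= ln (\sum_b q b * x b).
Proof.
move=> q_gt0 q_sum1 x_gt0; set M := \sum_b q b * x b.
have M_gt0 : 0 < M by apply: sum_mul_gt0 => // b; apply: ltW.
(* ln is below its tangent at M *)
have tangent b : ln (x b) <= ln M + (x b / M - 1).
  have xE : x b = M * (1 + (x b / M - 1)) by rewrite addrC subrK mulrC divfK ?gt_eqF.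
  rewrite {1}xE lnM ?posrE //; last by rewrite addrC subrK divr_gt0.
  by rewrite lerD2l le_ln1Dx // ltrBrDl addrN divr_gt0.
apply: le_trans (ler_sum _ (fun b _ => ler_wpM2l (ltW (q_gt0 b)) (tangent b))) _.
under eq_bigr do rewrite mulrDr mulrBr mulr1 mulrA.
rewrite big_split sumrB /= -!mulr_suml q_sum1 mul1r -/M divff ?gt_eqF //.
by rewrite subrr addr0.
Qed.

(* A Donsker-Varadhan type lower bound: if the spectral radius were smaller,
   a subinvariant positive vector would exist and Jensen's inequality on each
   row would give c < c. *)
Lemma ln_spectral_radius_ge (n : nat) (B : 'M[R]_n) (q : 'I_n -> R) :
  (forall i j, 0 < B i j) -> (forall i, 0 < q i) -> \sum_i q i = 1 ->
  \sum_i q i * \sum_j q j * ln (B i j / q j) <= ln (spectral_radius B).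
Proof.
move=> B_gt0 q_gt0 q_sum1; set c := \sum_i _.
have [[u [cu ru]]|no_root] :=
    pselect (exists u, expR c <= u /\ root (char_poly B) u).
  have u_gt0 := lt_le_trans (expR_gt0 c) cu.
  have rho_ge := spectral_radius_ge_root (ltW u_gt0) ru.
  rewrite -[c in c <= _]expRK ler_ln ?posrE ?expR_gt0 ?(le_trans cu rho_ge) //.
  exact: lt_le_trans u_gt0 rho_ge.
have [y [y_gt0 By_lt]] : exists y : 'I_n -> R, (forall i, 0 < y i) /\
    (forall i, \sum_j B i j * y j < expR c * y i).
  apply: exists_subinvariant_vector => [i j||]; rewrite ?ltW ?expR_gt0 //.
  by move=> u cu; apply/negP => ru; apply: no_root; exists u.
pose row i := \sum_j q j * (ln (B i j / q j) + ln (y j) - ln (y i)).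
have row_lt i : row i < c.
  have lnE j : ln (B i j / q j) + ln (y j) - ln (y i)
      = ln (B i j * y j / (q j * y i)).
    by rewrite !ln_div ?lnM ?posrE ?mulr_gt0 ?divr_gt0 //; ring.
  rewrite /row; under eq_bigr do rewrite lnE.
  have ratio_gt0 j : 0 < B i j * y j / (q j * y i) by rewrite divr_gt0 ?mulr_gt0.
  apply: le_lt_trans (sum_mul_ln_le_ln_sum q_gt0 q_sum1 ratio_gt0) _.
  rewrite -[c in _ < c]expRK ltr_ln ?posrE ?expR_gt0 ?sum_mul_gt0 //;
    last by move=> j; apply: ltW.
  have -> : \sum_j q j * (B i j * y j / (q j * y i)) = (\sum_j B i j * y j) / y i.
    by rewrite mulr_suml; apply: eq_bigr => j _; field; rewrite !gt_eqF.
  by rewrite ltr_pdivrMr.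
(* after averaging over i the [ln y] terms cancel *)
have avg_row : \sum_i q i * row i = c.
  have rowE i : row i =
      \sum_j q j * ln (B i j / q j) + (\sum_j q j * ln (y j) - ln (y i)).
    rewrite /row; under eq_bigr do rewrite mulrBr mulrDr.
    by rewrite sumrB big_split /= -mulr_suml q_sum1 mul1r addrA.
  under eq_bigr do rewrite rowE mulrDr mulrBr.
  by rewrite big_split sumrB /= -!mulr_suml q_sum1 mul1r subrr addr0.
have gap_gt0 i : 0 < c - row i by rewrite subr_gt0.
have := sum_mul_gt0 (fun i => ltW (q_gt0 i)) q_sum1 gap_gt0.
under eq_bigr do rewrite mulrBr.
by rewrite sumrB -mulr_suml q_sum1 mul1r avg_row subrr ltxx.
Qed.

Lemma sum_enum_val (T : finType) (F : T -> R) :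
  \sum_(i < #|T|) F (enum_val i) = \sum_x F x.
Proof. by rewrite -big_enum_val. Qed.

Lemma ln_spectral_radius_of_ge (T : finType) (A : T -> T -> R) (q : T -> R) :
  (forall a b, 0 < A a b) -> (forall a, 0 < q a) -> \sum_a q a = 1 ->
  \sum_a q a * \sum_b q b * ln (A a b / q b) <= ln (spectral_radius_of A).
Proof.
move=> A_gt0 q_gt0 q_sum1.
have -> : \sum_a q a * \sum_b q b * ln (A a b / q b) =
    \sum_i q (enum_val i) * \sum_j q (enum_val j) * ln (mx_of A i j / q (enum_val j)).
  rewrite -(sum_enum_val (fun a => q a * \sum_b q b * ln (A a b / q b))).
  apply: eq_bigr => i _; congr (_ * _); rewrite -sum_enum_val.
  by apply: eq_bigr => j _; rewrite mxE.
apply: ln_spectral_radius_ge => [i j|i|]; rewrite ?mxE ?sum_enum_val //.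
Qed.

Lemma spectral_radius_of_rank_one_le1 (T : finType) (A : T -> T -> R) (w : T -> R) :
  (forall a b, A a b = w b) -> \sum_b w b = 1 -> spectral_radius_of A <= 1.
Proof.
move=> Aw w_sum1; apply: (spectral_radius_rank_one_le1 (w := w \o enum_val)) => [i j|].
  by rewrite mxE Aw.
by rewrite sum_enum_val.
Qed.

End SpectralRadius.

Lemma ereal_sup_attained (R : realType) (I : Type) (F : I -> R) (v : R) (i0 : I) :
  (forall i, F i <= v) -> v <= F i0 ->
  ereal_sup [set (F i)%:E | i in [set: I]] = v%:E.
Proof.
move=> F_le Fi0_ge; apply/le_anti/andP; split.
  by apply: ge_ereal_sup => _ [i _ <-]; rewrite lee_fin.
apply: le_trans (_ : (v%:E <= (F i0)%:E)%E) _; first by rewrite lee_fin.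
by apply: ereal_sup_ubound; exists i0.
Qed.

Section PairKernel.
Variables (R : realType) (S T : finType) (s1 s2 : T -> S) (nu : T -> R).
Variables (mu : S -> R) (q : T -> R) (h : S -> R).

Definition pair_kernel (G : S -> S -> R) (a b : T) : R :=
  expR (G (s1 a) (s1 b) + G (s2 a) (s2 b)) * nu b.

Definition pair_mean (G : S -> S -> R) : R :=
  \sum_z \sum_z' mu z * mu z' * G z z'.

Definition pushes_to (s : T -> S) :=
  forall phi : S -> R, \sum_b q b * phi (s b) = \sum_z mu z * phi z.

Hypotheses (mu_sum1 : \sum_z mu z = 1) (q_gt0 : forall b, 0 < q b).
Hypotheses (q_s1 : pushes_to s1) (q_s2 : pushes_to s2).
Hypothesis nu_tilt : forall b, nu b * expR (h (s1 b) + h (s2 b)) = q b.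

Lemma pushes_to_sum1 : \sum_b q b = 1.
Proof.
have := q_s1 (fun=> 1); under eq_bigr do rewrite mulr1.
by under [in RHS]eq_bigr do rewrite mulr1; rewrite mu_sum1.
Qed.

Lemma pushes_to_mean (s : T -> S) (G : S -> S -> R) : pushes_to s ->
  \sum_a q a * \sum_b q b * G (s a) (s b) = pair_mean G.
Proof.
move=> q_s; rewrite (q_s (fun z => \sum_b q b * G z (s b))).
apply: eq_bigr => z _; rewrite (q_s (G z)) mulr_sumr.
by apply: eq_bigr => z' _; rewrite mulrA.
Qed.

Lemma pair_kernel_ratio G a b : pair_kernel G a b / q b =
  expR (G (s1 a) (s1 b) + G (s2 a) (s2 b) - (h (s1 b) + h (s2 b))).
Proof.
have nu_neq0 : nu b != 0.
  by apply: contraTneq (q_gt0 b) => nu0; rewrite -nu_tilt nu0 mul0r ltxx.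
rewrite /pair_kernel -nu_tilt expRB; field.
by rewrite nu_neq0 !gt_eqF ?expR_gt0.
Qed.

Lemma pair_kernel_gt0 G a b : 0 < pair_kernel G a b.
Proof.
rewrite -[pair_kernel G a b](divfK (lt0r_neq0 (q_gt0 b))) pair_kernel_ratio.
by rewrite mulr_gt0 ?expR_gt0.
Qed.

Lemma pair_objective_le G :
  2 * pair_mean G - ln (spectral_radius_of (pair_kernel G))
    <= 2 * \sum_z mu z * h z.
Proof.
have := ln_spectral_radius_of_ge (@pair_kernel_gt0 G) q_gt0 pushes_to_sum1.
under eq_bigr do under eq_bigr do rewrite pair_kernel_ratio expRK.
have inner a : \sum_b q b * (G (s1 a) (s1 b) + G (s2 a) (s2 b) - (h (s1 b) + h (s2 b)))
    = \sum_b q b * G (s1 a) (s1 b) + \sum_b q b * G (s2 a) (s2 b)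
      - (\sum_z mu z * h z + \sum_z mu z * h z).
  rewrite -{1}(q_s1 h) -(q_s2 h) -!big_split /= -sumrB.
  by apply: eq_bigr => b _; ring.
under eq_bigr do rewrite inner mulrBr mulrDr.
rewrite sumrB big_split /= -mulr_suml pushes_to_sum1 mul1r !pushes_to_mean //.
lra.
Qed.

Lemma pair_objective_attained :
  2 * \sum_z mu z * h z <= 2 * pair_mean (fun _ z' => h z')
    - ln (spectral_radius_of (pair_kernel (fun _ z' => h z'))).
Proof.
have rho_le1 : spectral_radius_of (pair_kernel (fun _ z' => h z')) <= 1.
  by apply: (spectral_radius_of_rank_one_le1 (w := q)) => [a b|];
    rewrite ?pushes_to_sum1 // /pair_kernel mulrC nu_tilt.
have -> : pair_mean (fun _ z' => h z') = \sum_z mu z * h z.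
  rewrite /pair_mean -[RHS]mul1r -mu_sum1 mulr_suml; apply: eq_bigr => z _.
  by rewrite mulr_sumr; apply: eq_bigr => z' _; rewrite mulrA.
by have := ln_le0 rho_le1; lra.
Qed.

Lemma ereal_sup_pair_objective (I : Type) (kappa : I -> S -> S -> R) (i0 : I) :
  kappa i0 = (fun _ z' => h z') ->
  ereal_sup [set (2 * pair_mean (kappa i)
                  - ln (spectral_radius_of (pair_kernel (kappa i))))%:E
            | i in [set: I]] = (2 * \sum_z mu z * h z)%:E.
Proof.
move=> kappa_i0; apply: (ereal_sup_attained (i0 := i0)) => [i|].
  exact: pair_objective_le.
by rewrite kappa_i0; apply: pair_objective_attained.
Qed.

End PairKernel.

Section Coupling.
Variables (R : realType) (K E : finType) (p : K -> E -> R).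
Hypothesis p_marg_gt0 : forall k, 0 < \sum_e p k e.

Lemma sum_coupling_l (phi : K -> E -> R) :
  \sum_k \sum_e \sum_e' p k e * p k e' / (\sum_e'' p k e'') * phi k e
    = \sum_k \sum_e p k e * phi k e.
Proof.
apply: eq_bigr => k _; apply: eq_bigr => e _.
have m_neq0 := lt0r_neq0 (p_marg_gt0 k).
transitivity (p k e * phi k e / (\sum_e'' p k e'') * \sum_e' p k e').
  by rewrite mulr_sumr; apply: eq_bigr => e' _; field.
by field.
Qed.

Lemma sum_coupling_r (phi : K -> E -> R) :
  \sum_k \sum_e \sum_e' p k e * p k e' / (\sum_e'' p k e'') * phi k e'
    = \sum_k \sum_e p k e * phi k e.
Proof.
rewrite -sum_coupling_l; apply: eq_bigr => k _; rewrite exchange_big.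
by apply: eq_bigr => e _; apply: eq_bigr => e' _; rewrite [p k e' * _]mulrC.
Qed.

End Coupling.

Lemma sum_pair (R : realType) (I J : finType) (F : I * J -> R) :
  \sum_(u : I * J) F u = \sum_i \sum_j F (i, j).
Proof. by rewrite pair_bigA; apply: eq_bigr => -[]. Qed.

Lemma expR_tilt (R : realType) (a b t : R) : 0 < t ->
  expR (a - ln t / 2 + (b - ln t / 2)) = expR a * expR b / t.
Proof.
move=> t_gt0; rewrite (_ : _ + _ = a + b - ln t); last by field.
by rewrite expRB expRD lnK ?posrE.
Qed.

Section IidKernels.
Variables (R : realType) (E : finType) (pi1 pi2 : E -> R) (f : E * E -> int).
Variables (theta : R) (r pis : E * E -> R).
Hypotheses (pi1_gt0 : forall x, 0 < pi1 x) (pi2_gt0 : forall y, 0 < pi2 y).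
Hypothesis pisE : forall z, pis z = expR (theta * (f z)%:~R) * pi1 z.1 * pi2 z.2.
Hypothesis pis_sum1 : \sum_z pis z = 1.
Hypothesis Rstar_pis : forall a b, Rstar pi1 pi2 f theta r a b = pis b.

Lemma pis_gt0 z : 0 < pis z.
Proof. by rewrite pisE !mulr_gt0 ?expR_gt0. Qed.

Lemma marg1_gt0 x : 0 < marg1 pis x.
Proof.
rewrite /marg1 (bigD1 x) //= ltr_pwDl ?pis_gt0 ?sumr_ge0 // => y _.
exact/ltW/pis_gt0.
Qed.

Lemma marg2_gt0 y : 0 < marg2 pis y.
Proof.
rewrite /marg2 (bigD1 y) //= ltr_pwDl ?pis_gt0 ?sumr_ge0 // => x _.
exact/ltW/pis_gt0.
Qed.

Lemma pihat_int_pair_mean g : pihat_int pi1 pi2 f theta r pis g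
  = pair_mean pis (fun z z' => g z.1 z.2 z'.1 z'.2).
Proof.
rewrite /pair_mean sum_pair; apply: eq_bigr => x _; apply: eq_bigr => y _.
rewrite sum_pair; apply: eq_bigr => x' _; apply: eq_bigr => y' _.
by rewrite /pihat Rstar_pis.
Qed.

Lemma relent_marg1 : relent (marg1 pis) pi1
  = \sum_z pis z * ln (marg1 pis z.1 / pi1 z.1).
Proof. by rewrite /relent sum_pair; apply: eq_bigr => x _; rewrite /marg1 mulr_suml. Qed.

Lemma relent_marg2 : relent (marg2 pis) pi2
  = \sum_z pis z * ln (marg2 pis z.2 / pi2 z.2).
Proof.
rewrite /relent sum_pair exchange_big.
by apply: eq_bigr => y _; rewrite /marg2 mulr_suml.
Qed.

Let h1 (z : E * E) := theta * (f z)%:~R - ln (marg1 pis z.1 / pi1 z.1) / 2.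
Let q1 (a : E * E * E) := pis (a.1.1, a.1.2) * pis (a.1.1, a.2) / marg1 pis a.1.1.

Lemma Phi1_pair_kernel g : Phi1 pi1 pi2 g =
  pair_kernel (fun a => (a.1.1, a.1.2)) (fun a => (a.1.1, a.2))
    (fun a => pi1 a.1.1 * pi2 a.1.2 * pi2 a.2) (fun z z' => g z.1 z.2 z'.1 z'.2).
Proof.
apply/funext => -[[x y] z]; apply/funext => -[[x' y'] z'].
by rewrite /Phi1 /pair_kernel /= !mulrA.
Qed.

Lemma J1_value : J1 pi1 pi2 f theta r pis
  = (2 * theta * integ pis f - relent (marg1 pis) pi1)%:E.
Proof.
rewrite /J1; under eq_imagel do rewrite pihat_int_pair_mean Phi1_pair_kernel.
have -> : 2 * theta * integ pis f - relent (marg1 pis) pi1 = 2 * \sum_z pis z * h1 z.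
  rewrite relent_marg1 /integ !mulr_sumr -sumrB.
  by apply: eq_bigr => z _; rewrite /h1; field.
apply: (@ereal_sup_pair_objective _ _ _ _ _ _ _ q1 h1 _ _ _ _ _ _ _
  (fun _ _ x' y' => h1 (x', y'))).
- exact: pis_sum1.
- by move=> a; rewrite divr_gt0 ?mulr_gt0 ?pis_gt0 ?marg1_gt0.
- move=> phi; rewrite !sum_pair /q1 /=.
  exact: (sum_coupling_l (p := fun x y => pis (x, y)) marg1_gt0).
- move=> phi; rewrite !sum_pair /q1 /=.
  exact: (sum_coupling_r (p := fun x y => pis (x, y)) marg1_gt0).
- move=> [[x y] z]; rewrite /h1 /q1 /= expR_tilt ?divr_gt0 ?marg1_gt0 //.
  rewrite [pis (x, y)]pisE [pis (x, z)]pisE /=.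
  by field; rewrite !gt_eqF ?marg1_gt0.
- by apply/funext => _; apply/funext => -[].
Qed.

Let h2 (z : E * E) := theta * (f z)%:~R - ln (marg2 pis z.2 / pi2 z.2) / 2.
Let q2 (a : E * E * E) := pis (a.1.1, a.2) * pis (a.1.2, a.2) / marg2 pis a.2.

Lemma Phi2_pair_kernel g : Phi2 pi1 pi2 g =
  pair_kernel (fun a => (a.1.1, a.2)) (fun a => (a.1.2, a.2))
    (fun a => pi1 a.1.1 * pi1 a.1.2 * pi2 a.2) (fun z z' => g z.1 z.2 z'.1 z'.2).
Proof.
apply/funext => -[[x w] y]; apply/funext => -[[x' w'] y'].
by rewrite /Phi2 /pair_kernel /= !mulrA.
Qed.

Lemma J2_value : J2 pi1 pi2 f theta r pis
  = (2 * theta * integ pis f - relent (marg2 pis) pi2)%:E.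
Proof.
rewrite /J2; under eq_imagel do rewrite pihat_int_pair_mean Phi2_pair_kernel.
have -> : 2 * theta * integ pis f - relent (marg2 pis) pi2 = 2 * \sum_z pis z * h2 z.
  rewrite relent_marg2 /integ !mulr_sumr -sumrB.
  by apply: eq_bigr => z _; rewrite /h2; field.
(* the coupling lemmas need the shared coordinate y as the outer index *)
have sum_y_first (F : E -> E -> E -> R) :
    \sum_x \sum_w \sum_y F x w y = \sum_y \sum_x \sum_w F x w y.
  by rewrite [RHS]exchange_big; apply: eq_bigr => x _; apply: exchange_big.
apply: (@ereal_sup_pair_objective _ _ _ _ _ _ _ q2 h2 _ _ _ _ _ _ _
  (fun _ _ x' y' => h2 (x', y'))).
- exact: pis_sum1.
- by move=> a; rewrite divr_gt0 ?mulr_gt0 ?pis_gt0 ?marg2_gt0.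
- move=> phi; rewrite !sum_pair /q2 /= sum_y_first [RHS]exchange_big.
  exact: (sum_coupling_l (p := fun y x => pis (x, y)) marg2_gt0).
- move=> phi; rewrite !sum_pair /q2 /= sum_y_first [RHS]exchange_big.
  exact: (sum_coupling_r (p := fun y x => pis (x, y)) marg2_gt0).
- move=> [[x w] y]; rewrite /h2 /q2 /= expR_tilt ?divr_gt0 ?marg2_gt0 //.
  rewrite [pis (x, y)]pisE [pis (w, y)]pisE /=.
  by field; rewrite !gt_eqF ?marg2_gt0.
- by apply/funext => _; apply/funext => -[].
Qed.

End IidKernels.

Section RankOne.
Variables (R : realType) (T : finType) (w : T -> R).

Lemma rank_one_positive_eigenvector (r : T -> R) (a0 : T) :
  (forall a, 0 < r a) -> (forall a, \sum_b w b * r b = r a) ->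
  \sum_b w b = 1 /\ forall a b, r a = r b.
Proof.
move=> r_gt0 r_eig.
have r_const a b : r a = r b by rewrite -r_eig (r_eig b).
split=> //; apply: (mulIf (lt0r_neq0 (r_gt0 a0))); rewrite mul1r mulr_suml.
by rewrite -[RHS]r_eig; apply: eq_bigr => b _; rewrite (r_const a0 b).
Qed.

Lemma rank_one_stationary (p : T -> R) : \sum_a p a = 1 ->
  (forall b, \sum_a p a * w b = p b) -> forall b, p b = w b.
Proof. by move=> p_sum1 p_inv b; rewrite -p_inv -mulr_suml p_sum1 mul1r. Qed.

End RankOne.

Lemma relent_exp_tilt (R : realType) (T : finType) (p nu F : T -> R) :
  (forall z, 0 < nu z) -> (forall z, p z = expR (F z) * nu z) ->
  relent p nu = \sum_z p z * F z.
Proof.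
move=> nu_gt0 pE; apply: eq_bigr => z _.
by rewrite {2}pE mulfK ?lt0r_neq0 // expRK.
Qed.

Theorem mainTheorem18 (R : realType) (E : finType)
  (pi1 pi2 : E -> R) (f : E * E -> int)
  (hpi1pos : forall x, 0 < pi1 x) (hpi1sum : \sum_(x : E) pi1 x = 1)
  (hpi2pos : forall y, 0 < pi2 y) (hpi2sum : \sum_(y : E) pi2 y = 1)
  (hneg : \sum_(z : E * E) pi1 z.1 * pi2 z.2 * (f z)%:~R < 0)
  (hpos : exists z : E * E, (0 < f z)%R)
  (theta : R) (htheta : 0 < theta)
  (hphi : spectral_radius_of (Phi pi1 pi2 f theta) = 1)
  (huniq : forall t : R, 0 < t -> spectral_radius_of (Phi pi1 pi2 f t) = 1 -> t = theta)
  (r : E * E -> R) (hrpos : forall z, 0 < r z)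
  (hreig : forall a, \sum_(b : E * E) Phi pi1 pi2 f theta a b * r b = r a)
  (pis : E * E -> R) (hpisnn : forall z, 0 <= pis z)
  (hpissum : \sum_(z : E * E) pis z = 1)
  (hpisinv : forall b, \sum_(a : E * E) pis a * Rstar pi1 pi2 f theta r a b = pis b) :
  \sum_(z : E * E) expR (theta * (f z)%:~R) * pi1 z.1 * pi2 z.2 = 1 /\
  (forall z : E * E, pis z = expR (theta * (f z)%:~R) * pi1 z.1 * pi2 z.2) /\
  J1 pi1 pi2 f theta r pis
    = (2 * theta * integ pis f - relent (marg1 pis) pi1)%:E /\
  J2 pi1 pi2 f theta r pis
    = (2 * theta * integ pis f - relent (marg2 pis) pi2)%:E /\
  ((((3 * theta * integ pis f)%:E
      < 2%:E * Order.min (J1 pi1 pi2 f theta r pis) (J2 pi1 pi2 f theta r pis))%E)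
   <-> relent pis (fun z => pi1 z.1 * pi2 z.2)
       > 2 * Num.max (relent (marg1 pis) pi1) (relent (marg2 pis) pi2)).
Proof.
have [z0 _] := hpos.
pose w z := expR (theta * (f z)%:~R) * pi1 z.1 * pi2 z.2.
have [w_sum1 r_const] := rank_one_positive_eigenvector (w := w) z0 hrpos hreig.
have Rstar_w a b : Rstar pi1 pi2 f theta r a b = w b.
  by rewrite /Rstar (r_const b a) divff ?mul1r ?lt0r_neq0.
have pisE : forall z, pis z = w z.
  apply: rank_one_stationary => // b; rewrite -[RHS]hpisinv.
  by apply: eq_bigr => a _; rewrite Rstar_w.
have Rstar_pis a b : Rstar pi1 pi2 f theta r a b = pis b by rewrite Rstar_w pisE.
have J1E := J1_value hpi1pos hpi2pos pisE hpissum Rstar_pis.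
have J2E := J2_value hpi1pos hpi2pos pisE hpissum Rstar_pis.
have HE : relent pis (fun z => pi1 z.1 * pi2 z.2) = theta * integ pis f.
  rewrite (relent_exp_tilt (F := fun z => theta * (f z)%:~R)) ?mulr_sumr => [|z|z].
  - by apply: eq_bigr => z _; rewrite mulrCA.
  - exact: mulr_gt0.
  - by rewrite pisE /w mulrA.
do 4!split => //; rewrite J1E J2E -EFin_min -EFinM lte_fin HE.
set H1 := relent (marg1 pis) pi1; set H2 := relent (marg2 pis) pi2.
rewrite -!mulrA; set t := theta * integ pis f.
by case: (leP H1 H2); case: (leP (2 * t - H1) (2 * t - H2)); split; lra.
Qed.
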